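(* Let $X$, $Y$ be racks. (i) If there are $y_1\neq y_2\in Y$ and $x_1\neq x_2\in X$ with $y_1\triangleright y_2=y_2$ and $x_1\triangleright(x_2\triangleright(x_1\triangleright x_2))\neq x_2$, then the product rack $X\times Y$ is of type D. (ii) If there are pairwise distinct $y_1,\dots,y_4\in Y$ and $x_1,\dots,x_4\in X$ with $y_i\triangleright y_j=y_j$ and $x_i\triangleright x_j\neq x_j$ for all $i\neq j$, then $X\times Y$ is of type F. (iii) Let $X^{(2)}=X_1\sqcup X_2$, where $\varphi_i:X\to X_i$ are bijections onto disjoint sets, with rack structure $\varphi_i(x)\triangleright\varphi_j(y)=\varphi_j(x\triangleright y)$ for $i,j\in\{1,2\}$. If there are $x_1\neq x_2\in X$ with $x_1\triangleright(x_2\triangleright(x_1\triangleright x_2))\neq x_2$, then $X^{(2)}$ is of type D.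
   Context: Rack: nonempty set with operation $\triangleright$, each left translation bijective, self-distributive. The product rack has $(x,y)\triangleright(x',y')=(x\triangleright x',y\triangleright y')$. A subrack $Z$ is decomposable if $Z=R\sqcup S$ with nonempty subracks $R,S$, $Z\triangleright R=R$, $Z\triangleright S=S$. Type D: there is a decomposable subrack $R\sqcup S$ and $r\in R$, $s\in S$ with $r\triangleright(s\triangleright(r\triangleright s))\neq s$. Type F: there are pairwise disjoint subracks $R_1,\dots,R_4$, $r_a\in R_a$, with $R_a\triangleright R_b=R_b$ and $r_a\triangleright r_b\neq r_b$ for all $a\neq b$. *)

Section Racks.
Context {T : Type} (op : T -> T -> T).

Definition is_rack : Prop :=
  inhabited T /\
  (forall x, exists g : T -> T,
      (forall y, g (op x y) = y) /\ (forall y, op x (g y) = y)) /\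
  (forall x y z, op x (op y z) = op (op x y) (op x z)).

Definition subrack (R : T -> Prop) : Prop :=
  (exists r, R r) /\
  (forall x y, R x -> R y -> R (op x y)) /\
  (forall x y, R x -> R y -> exists z, R z /\ op x z = y).

(* A |> B = B  as sets:  { a |> b | a in A, b in B } = B. *)
Definition acts_onto (A B : T -> Prop) : Prop :=
  forall t, B t <-> exists a b, A a /\ B b /\ op a b = t.

Definition decomposition (Z R S : T -> Prop) : Prop :=
  subrack Z /\ subrack R /\ subrack S /\
  (forall t, Z t <-> (R t \/ S t)) /\
  (forall t, ~ (R t /\ S t)) /\
  acts_onto Z R /\ acts_onto Z S.

Definition typeD : Prop :=
  exists R S : T -> Prop,
    decomposition (fun t => R t \/ S t) R S /\
    exists r s, R r /\ S s /\ op r (op s (op r s)) <> s.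

Definition typeF : Prop :=
  exists (R : nat -> T -> Prop) (r : nat -> T),
    (forall a, a < 4 -> subrack (R a) /\ R a (r a)) /\
    (forall a b, a < 4 -> b < 4 -> a <> b ->
       (forall t, ~ (R a t /\ R b t)) /\
       acts_onto (R a) (R b) /\
       op (r a) (r b) <> r b).

End Racks.

Definition prod_op {X Y : Type} (opX : X -> X -> X) (opY : Y -> Y -> Y)
  (p q : X * Y) : X * Y :=
  (opX (fst p) (fst q), opY (snd p) (snd q)).

(* X^(2) = X_1 ⊔ X_2 modelled as X + X with phi_1 = inl, phi_2 = inr:
   phi_i(x) |> phi_j(y) = phi_j(x |> y). *)
Definition double_op {X : Type} (opX : X -> X -> X) (p q : X + X) : X + X :=
  let x := match p with inl a => a | inr a => a end in
  match q with
  | inl y => inl (opX x y)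
  | inr y => inr (opX x y)
  end.

(* The key observation is that if the left translations by the elements of a
   set [gen] of a rack pairwise commute, then every element of the orbit of a
   generator [c] (under the group generated by these translations) has the
   same left translation as [c].  Hence such orbits are subracks, any nonempty
   union of orbits acts onto every orbit, and when a generator [d] is fixed by
   all other generators, its orbit is disjoint from the orbit of any other
   generator.  In a rack, [a |> b = b] makes the translations by [a] and [b]
   commute, so the hypotheses of (i) and (ii) produce such orbits in [Y]; their
   preimages under the projection [X * Y -> Y] are the subracks required for
   type D, resp. type F, while the witnesses are separated in the
   [X]-coordinate.  Finally (iii) follows from (i): the double [X^(2)] is
   isomorphic to [X * B] for the trivial rack [B] on two points, and type D is
   invariant under rack isomorphisms. *)

From Stdlib Require Import Arith.

Section RackBasics.
Context {T : Type} {op : T -> T -> T} (hrack : is_rack op).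

Lemma translation_injective x a b : op x a = op x b -> a = b.
Proof.
  intros E. destruct hrack as [_ [bij _]]. destruct (bij x) as [g [gK _]].
  rewrite <- (gK a), <- (gK b), E. reflexivity.
Qed.

Lemma translation_surjective x b : exists a, op x a = b.
Proof.
  destruct hrack as [_ [bij _]]. destruct (bij x) as [g [_ Kg]].
  exists (g b). apply Kg.
Qed.

Lemma self_distributive x y z : op x (op y z) = op (op x y) (op x z).
Proof. destruct hrack as [_ [_ sd]]. apply sd. Qed.

Lemma translations_commute a b u : op a b = b -> op a (op b u) = op b (op a u).
Proof. intros E. rewrite self_distributive, E. reflexivity. Qed.

End RackBasics.

Section Orbits.
Context {T : Type} {op : T -> T -> T} (hrack : is_rack op) (gen : T -> Prop).
Hypothesis gen_commute :
  forall g h u, gen g -> gen h -> op g (op h u) = op h (op g u).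

Inductive orbit (c : T) : T -> Prop :=
| orbit_refl : orbit c c
| orbit_forward g w : gen g -> orbit c w -> orbit c (op g w)
| orbit_backward g w : gen g -> orbit c (op g w) -> orbit c w.

Definition acts_as_generator (a : T) : Prop :=
  exists c, gen c /\ forall z, op a z = op c z.

Lemma orbit_translation c w : gen c -> orbit c w -> forall z, op w z = op c z.
Proof.
  intros Hc Hw. induction Hw as [|g w Hg _ IH|g w Hg _ IH]; intros z.
  - reflexivity.
  - destruct (translation_surjective hrack g z) as [a <-].
    rewrite <- (self_distributive hrack), IH. apply gen_commute; assumption.
  - apply (translation_injective hrack g).
    rewrite (self_distributive hrack), IH. symmetry. apply gen_commute; assumption.
Qed.

Lemma orbit_acts_as_generator c w : gen c -> orbit c w -> acts_as_generator w.
Proof. intros Hc Hw. exists c. split; [exact Hc|exact (orbit_translation c w Hc Hw)]. Qed.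

Lemma orbit_closed a c b : acts_as_generator a -> orbit c b -> orbit c (op a b).
Proof.
  intros [g [Hg Ea]] Hb. rewrite Ea. apply orbit_forward; assumption.
Qed.

Lemma orbit_solvable a c b : acts_as_generator a -> orbit c b ->
  exists z, orbit c z /\ op a z = b.
Proof.
  intros [g [Hg Ea]] Hb. destruct (translation_surjective hrack g b) as [z Hz].
  exists z. split.
  - apply (orbit_backward c g z Hg). rewrite Hz. exact Hb.
  - rewrite Ea. exact Hz.
Qed.

Lemma orbit_fixed_point d : (forall g, gen g -> op g d = d) ->
  forall c w, orbit c w -> (w = d <-> c = d).
Proof.
  intros Fix c w Hw. induction Hw as [|g w Hg _ IH|g w Hg _ IH].
  - tauto.
  - rewrite <- IH. split; intros E.
    + apply (translation_injective hrack g). rewrite Fix; assumption.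
    + subst. apply Fix; assumption.
  - rewrite <- IH. split; intros E.
    + subst. apply Fix; assumption.
    + apply (translation_injective hrack g). rewrite Fix; assumption.
Qed.

Lemma orbit_subrack c : gen c -> subrack op (orbit c).
Proof.
  intros Hc. split; [exists c; constructor|split]; intros a b Ha Hb.
  - exact (orbit_closed a c b (orbit_acts_as_generator c a Hc Ha) Hb).
  - exact (orbit_solvable a c b (orbit_acts_as_generator c a Hc Ha) Hb).
Qed.

Lemma orbit_union_acts_as_generator c d : gen c -> gen d ->
  forall a, orbit c a \/ orbit d a -> acts_as_generator a.
Proof.
  intros Hc Hd a [Ha|Ha].
  - exact (orbit_acts_as_generator c a Hc Ha).
  - exact (orbit_acts_as_generator d a Hd Ha).
Qed.

Lemma orbit_union_subrack c d : gen c -> gen d ->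
  subrack op (fun t => orbit c t \/ orbit d t).
Proof.
  intros Hc Hd.
  pose proof (orbit_union_acts_as_generator c d Hc Hd) as Gen.
  split; [exists c; left; constructor|split]; intros a b Ha Hb.
  - destruct Hb; [left|right]; apply orbit_closed; auto.
  - destruct Hb as [Hb|Hb];
      destruct (orbit_solvable a _ b (Gen a Ha) Hb) as [z [Hz Ez]];
      exists z; auto.
Qed.

Lemma orbit_acted_onto (P : T -> Prop) c :
  (exists a, P a) -> (forall a, P a -> acts_as_generator a) ->
  acts_onto op P (orbit c).
Proof.
  intros [a0 Ha0] Gen t. split.
  - intros Ht. destruct (orbit_solvable a0 c t (Gen a0 Ha0) Ht) as [z [Hz Ez]].
    exists a0, z. auto.
  - intros [a [b [Ha [Hb <-]]]]. exact (orbit_closed a c b (Gen a Ha) Hb).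
Qed.

(* If every generator other than [d] fixes [d], the orbit of [d] meets the
   orbit of no other generator: a common element [t] would force [d] to act
   as [c], making [d] a common fixed point, alone in its orbit. *)
Lemma orbits_disjoint c d : gen c -> gen d -> c <> d ->
  (forall g, gen g -> g = d \/ op g d = d) ->
  forall t, ~ (orbit c t /\ orbit d t).
Proof.
  intros Hc Hd Ncd Fix t [Tc Td].
  assert (Ecd : op c d = d) by (destruct (Fix c Hc); [contradiction|assumption]).
  assert (Edd : op d d = d).
  { rewrite <- (orbit_translation d t Hd Td), (orbit_translation c t Hc Tc).
    exact Ecd. }
  assert (AllFix : forall g, gen g -> op g d = d)
    by (intros g Hg; destruct (Fix g Hg) as [->|]; assumption).
  apply Ncd. apply (orbit_fixed_point d AllFix c t Tc).
  exact (proj2 (orbit_fixed_point d AllFix d t Td) eq_refl).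
Qed.

Lemma orbit_decomposition c d : gen c -> gen d -> c <> d ->
  (forall g, gen g -> g = d \/ op g d = d) ->
  decomposition op (fun t => orbit c t \/ orbit d t) (orbit c) (orbit d).
Proof.
  intros Hc Hd Ncd Fix.
  pose proof (orbit_union_acts_as_generator c d Hc Hd) as Gen.
  assert (NonEmpty : exists a, orbit c a \/ orbit d a) by (exists c; left; constructor).
  split; [apply orbit_union_subrack; assumption|].
  split; [apply orbit_subrack; assumption|].
  split; [apply orbit_subrack; assumption|].
  split; [intros t; tauto|].
  split; [exact (orbits_disjoint c d Hc Hd Ncd Fix)|].
  split; apply orbit_acted_onto; assumption.
Qed.

End Orbits.

Arguments orbit {T} op gen c _.

Section ProductLift.
Context {X Y : Type} {opX : X -> X -> X} {opY : Y -> Y -> Y} (hX : is_rack opX).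

Lemma lift_subrack (A : Y -> Prop) : subrack opY A ->
  subrack (prod_op opX opY) (fun p => A (snd p)).
Proof.
  intros [[a Ha] [Closed Solve]]. destruct hX as [[x0] _].
  split; [exists (x0, a); exact Ha|split].
  - intros p q Hp Hq. exact (Closed _ _ Hp Hq).
  - intros [px py] [qx qy] Hp Hq. destruct (Solve _ _ Hp Hq) as [zy [Hzy Ey]].
    destruct (translation_surjective hX px qx) as [zx Ex].
    exists (zx, zy). split; [exact Hzy|]. simpl in Ey. unfold prod_op; simpl. rewrite Ex, Ey. reflexivity.
Qed.

Lemma lift_acts_onto (A B : Y -> Prop) : acts_onto opY A B ->
  acts_onto (prod_op opX opY) (fun p => A (snd p)) (fun p => B (snd p)).
Proof.
  intros Onto [tx ty]. destruct hX as [[x0] _]. split.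
  - intros Ht. destruct (proj1 (Onto ty) Ht) as [a [b [Ha [Hb Ey]]]].
    destruct (translation_surjective hX x0 tx) as [zx Ex].
    exists (x0, a), (zx, b). split; [exact Ha|split; [exact Hb|]].
    unfold prod_op; simpl. rewrite Ex, Ey. reflexivity.
  - intros [a [b [Ha [Hb <-]]]]. apply (proj2 (Onto _)). exists (snd a), (snd b). auto.
Qed.

Lemma lift_decomposition (Z R S : Y -> Prop) : decomposition opY Z R S ->
  decomposition (prod_op opX opY)
    (fun p => Z (snd p)) (fun p => R (snd p)) (fun p => S (snd p)).
Proof.
  intros [SZ [SR [SS [Union [Disj [AR AS]]]]]].
  split; [apply lift_subrack; exact SZ|].
  split; [apply lift_subrack; exact SR|].
  split; [apply lift_subrack; exact SS|].
  split; [intros p; apply Union|].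
  split; [intros p; apply Disj|].
  split; apply lift_acts_onto; assumption.
Qed.

End ProductLift.

Section Isomorphism.
Context {T U : Type} {opT : T -> T -> T} {opU : U -> U -> U}.
Variables (phi : U -> T) (psi : T -> U).
Hypotheses (phi_psi : forall t, phi (psi t) = t) (psi_phi : forall u, psi (phi u) = u).
Hypothesis phi_hom : forall u v, phi (opU u v) = opT (phi u) (phi v).

Lemma pullback_subrack (A : T -> Prop) : subrack opT A ->
  subrack opU (fun u => A (phi u)).
Proof.
  intros [[a Ha] [Closed Solve]]. split; [exists (psi a); rewrite phi_psi; exact Ha|split].
  - intros u v Hu Hv. rewrite phi_hom. exact (Closed _ _ Hu Hv).
  - intros u v Hu Hv. destruct (Solve _ _ Hu Hv) as [z [Hz Ez]].
    exists (psi z). rewrite phi_psi. split; [exact Hz|].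
    rewrite <- (psi_phi (opU u (psi z))), phi_hom, phi_psi, Ez. apply psi_phi.
Qed.

Lemma pullback_acts_onto (A B : T -> Prop) : acts_onto opT A B ->
  acts_onto opU (fun u => A (phi u)) (fun u => B (phi u)).
Proof.
  intros Onto t. split.
  - intros Ht. destruct (proj1 (Onto _) Ht) as [a [b [Ha [Hb Eab]]]].
    exists (psi a), (psi b). rewrite !phi_psi. split; [exact Ha|split; [exact Hb|]].
    rewrite <- (psi_phi (opU _ _)), phi_hom, !phi_psi, Eab. apply psi_phi.
  - intros [a [b [Ha [Hb <-]]]]. apply (proj2 (Onto _)).
    exists (phi a), (phi b). rewrite phi_hom. auto.
Qed.

Lemma typeD_pullback : typeD opT -> typeD opU.
Proof.
  intros [R [S [[SZ [SR [SS [Union [Disj [AR AS]]]]]] [r [s [Hr [Hs Ne]]]]]]].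
  exists (fun u => R (phi u)), (fun u => S (phi u)). split.
  - split; [exact (pullback_subrack _ SZ)|].
    split; [exact (pullback_subrack _ SR)|].
    split; [exact (pullback_subrack _ SS)|].
    split; [intros u; tauto|].
    split; [intros u; apply Disj|].
    split; [exact (pullback_acts_onto _ _ AR)|exact (pullback_acts_onto _ _ AS)].
  - exists (psi r), (psi s). rewrite !phi_psi. split; [exact Hr|split; [exact Hs|]].
    intros E. apply Ne. apply (f_equal phi) in E. rewrite !phi_hom, !phi_psi in E. exact E.
Qed.

End Isomorphism.

Lemma product_typeD {X Y : Type} (opX : X -> X -> X) (opY : Y -> Y -> Y)
  (hX : is_rack opX) (hY : is_rack opY) (y1 y2 : Y) (x1 x2 : X) :
  y1 <> y2 -> opY y1 y2 = y2 -> opX x1 (opX x2 (opX x1 x2)) <> x2 ->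
  typeD (prod_op opX opY).
Proof.
  intros Ny E12 Nx.
  set (gen := fun c => c = y1 \/ c = y2).
  assert (Commute : forall g h u, gen g -> gen h -> opY g (opY h u) = opY h (opY g u)).
  { intros g h u [->| ->] [->| ->]; try reflexivity.
    - apply (translations_commute hY). exact E12.
    - symmetry. apply (translations_commute hY). exact E12. }
  assert (Fix : forall g, gen g -> g = y2 \/ opY g y2 = y2)
    by (intros g [->| ->]; auto).
  pose proof (orbit_decomposition hY gen Commute y1 y2
                (or_introl eq_refl) (or_intror eq_refl) Ny Fix) as Dec.
  exists (fun p => orbit opY gen y1 (snd p)), (fun p => orbit opY gen y2 (snd p)).
  split; [exact (lift_decomposition hX _ _ _ Dec)|].
  exists (x1, y1), (x2, y2). split; [constructor|split; [constructor|]].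
  intros E. apply (f_equal fst) in E. exact (Nx E).
Qed.

Lemma product_typeF {X Y : Type} (opX : X -> X -> X) (opY : Y -> Y -> Y)
  (hX : is_rack opX) (hY : is_rack opY) (y : nat -> Y) (x : nat -> X) :
  (forall i j, i < 4 -> j < 4 -> i <> j ->
     y i <> y j /\ opY (y i) (y j) = y j /\ opX (x i) (x j) <> x j) ->
  typeF (prod_op opX opY).
Proof.
  intros H.
  set (gen := fun c => exists i, i < 4 /\ c = y i).
  assert (Gen : forall a, a < 4 -> gen (y a)) by (intros a Ha; exists a; auto).
  assert (Commute : forall g h u, gen g -> gen h -> opY g (opY h u) = opY h (opY g u)).
  { intros g h u [i [Hi ->]] [j [Hj ->]].
    destruct (Nat.eq_dec i j) as [->|Nij]; [reflexivity|].
    apply (translations_commute hY). apply (H i j Hi Hj Nij). }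
  assert (Fix : forall b, b < 4 -> forall g, gen g -> g = y b \/ opY g (y b) = y b).
  { intros b Hb g [i [Hi ->]].
    destruct (Nat.eq_dec i b) as [->|Nib]; [left; reflexivity|right].
    apply (H i b Hi Hb Nib). }
  exists (fun a p => orbit opY gen (y a) (snd p)), (fun a => (x a, y a)). split.
  - intros a Ha. split; [|constructor].
    exact (lift_subrack hX _ (orbit_subrack hY gen Commute _ (Gen a Ha))).
  - intros a b Ha Hb Nab. destruct (H a b Ha Hb Nab) as [Ny [_ Nx]]. split; [|split].
    + intros t. exact (orbits_disjoint hY gen Commute _ _ (Gen a Ha) (Gen b Hb) Ny
                         (Fix b Hb) (snd t)).
    + apply (lift_acts_onto hX). apply (orbit_acted_onto hY).
      * exists (y a). constructor.
      * intros w Hw. exact (orbit_acts_as_generator hY gen Commute _ w (Gen a Ha) Hw).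
    + intros E. apply (f_equal fst) in E. exact (Nx E).
Qed.

Definition trivial_op {B : Type} (a b : B) : B := b.

Lemma trivial_is_rack (B : Type) : inhabited B -> is_rack (@trivial_op B).
Proof.
  intros HB. split; [exact HB|split].
  - intros a. exists (fun b => b). split; reflexivity.
  - reflexivity.
Qed.

(* [X^(2)] is the product of [X] with the trivial rack on two points. *)
Definition double_to_product {X : Type} (p : X + X) : X * bool :=
  match p with inl x => (x, true) | inr x => (x, false) end.

Definition product_to_double {X : Type} (p : X * bool) : X + X :=
  if snd p then inl (fst p) else inr (fst p).

Lemma double_typeD {X : Type} (opX : X -> X -> X) (hX : is_rack opX) (x1 x2 : X) :
  opX x1 (opX x2 (opX x1 x2)) <> x2 -> typeD (double_op opX).
Proof.
  intros Nx.
  apply (typeD_pullback (opT := prod_op opX trivial_op)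
           double_to_product product_to_double).
  - intros [x []]; reflexivity.
  - intros [x|x]; reflexivity.
  - intros [u|u] [v|v]; reflexivity.
  - apply (product_typeD opX trivial_op hX (trivial_is_rack bool (inhabits true))
             true false x1 x2); [discriminate|reflexivity|exact Nx].
Qed.

Theorem mainTheorem4 (X Y : Type) (opX : X -> X -> X) (opY : Y -> Y -> Y)
  (hX : is_rack opX) (hY : is_rack opY) :
  (* (i) *)
  ((exists (y1 y2 : Y) (x1 x2 : X),
      y1 <> y2 /\ x1 <> x2 /\ opY y1 y2 = y2 /\
      opX x1 (opX x2 (opX x1 x2)) <> x2) ->
   typeD (prod_op opX opY)) /\
  (* (ii) *)
  ((exists (y : nat -> Y) (x : nat -> X),
      forall i j, i < 4 -> j < 4 -> i <> j ->
        y i <> y j /\ x i <> x j /\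
        opY (y i) (y j) = y j /\ opX (x i) (x j) <> x j) ->
   typeF (prod_op opX opY)) /\
  (* (iii) *)
  ((exists x1 x2 : X, x1 <> x2 /\ opX x1 (opX x2 (opX x1 x2)) <> x2) ->
   typeD (double_op opX)).
Proof.
  split; [|split].
  - intros [y1 [y2 [x1 [x2 [Ny [_ [E12 Nx]]]]]]].
    exact (product_typeD opX opY hX hY y1 y2 x1 x2 Ny E12 Nx).
  - intros [y [x H]]. apply (product_typeF opX opY hX hY y x).
    intros i j Hi Hj Nij. destruct (H i j Hi Hj Nij) as [Ny [_ Rest]]. auto.
  - intros [x1 [x2 [_ Nx]]]. exact (double_typeD opX hX x1 x2 Nx).
Qed.
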